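(* Let $A$ be a finite nonempty set, $M\subseteq A^A$, and let $\emptyset\ne B\subsetneq A$ be invariant under $M$ (i.e., $g(B)\subseteq B$ for all $g\in M$). Then $\mathrm{gQuord}_B(M\restriction_B)=(\mathrm{gQuord}_A M)\restriction_B$.
   Context: $M\restriction_B:=\{g\restriction_B\mid g\in M\}\subseteq B^B$; for a relation $\rho\subseteq A^m$, $\rho\restriction_B:=\rho\cap B^m$, and for a set $Q$ of relations, $Q\restriction_B:=\{\rho\restriction_B\mid\rho\in Q\}$. A relation $\rho\subseteq X^m$ is a generalized quasiorder on $X$ if it is reflexive ($(x,\dots,x)\in\rho$ for all $x\in X$) and for every $m\times m$-matrix over $X$ whose rows and columns all lie in $\rho$, its diagonal lies in $\rho$. $\mathrm{gQuord}_X N$ is the set of all generalized quasiorders on $X$ preserved by every $h\in N\subseteq X^X$ (i.e., $h$ maps tuples of $\rho$ componentwise into $\rho$). *)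

From mathcomp Require Import all_boot.
Set Implicit Arguments. Unset Strict Implicit. Unset Printing Implicit Defensive.

Definition reflexive_rel (X : finType) (m : nat) (rho : {set m.-tuple X}) : Prop :=
  forall x : X, [tuple x | _ < m] \in rho.

Definition diag_closed (X : finType) (m : nat) (rho : {set m.-tuple X}) : Prop :=
  forall Mx : 'I_m -> 'I_m -> X,
    (forall i : 'I_m, [tuple Mx i j | j < m] \in rho) ->
    (forall j : 'I_m, [tuple Mx i j | i < m] \in rho) ->
    [tuple Mx i i | i < m] \in rho.

Definition gen_quasiorder (X : finType) (m : nat) (rho : {set m.-tuple X}) : Prop :=
  reflexive_rel rho /\ diag_closed rho.

Definition preserves (X : finType) (m : nat) (h : X -> X) (rho : {set m.-tuple X}) : Prop :=
  forall t, t \in rho -> map_tuple h t \in rho.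

Definition gQuord (X : finType) (N : {set {ffun X -> X}}) (m : nat)
  (rho : {set m.-tuple X}) : Prop :=
  gen_quasiorder rho /\ forall h, h \in N -> preserves h rho.

Definition subT (A : finType) (B : {set A}) : finType := {x : A | x \in B}.

Definition restr_maps (A : finType) (B : {set A}) (M : {set {ffun A -> A}})
  : {set {ffun subT B -> subT B}} :=
  [set h : {ffun subT B -> subT B} |
     [exists g in M, [forall x : subT B, val (h x) == g (val x)]]].

Definition restr_rel (A : finType) (B : {set A}) (m : nat) (rho : {set m.-tuple A})
  : {set m.-tuple (subT B)} :=
  [set t : m.-tuple (subT B) | map_tuple val t \in rho].

Definition invariant_under (A : finType) (B : {set A}) (M : {set {ffun A -> A}}) : Prop :=
  forall g, g \in M -> forall x, x \in B -> g x \in B.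

From mathcomp Require Import all_boot.
Set Implicit Arguments. Unset Strict Implicit. Unset Printing Implicit Defensive.

(* Restricting to B preserves reflexivity, diagonal closure and compatibility,
   since every map of M|_B is the restriction of a map of M; this gives one
   inclusion.  Conversely, a generalized quasiorder sigma on B preserved by M|_B
   is the restriction of rho := sigma ∪ Δ_A, where Δ_A is the diagonal of A.
   A tuple of rho with an entry outside B is constant, so a matrix with rows and
   columns in rho either lies in B^(m x m), where diagonal closure of sigma
   applies, or is constant; and M maps sigma into itself (B is M-invariant)
   and Δ_A into itself. *)

Lemma map_mktuple (T U : Type) (f : T -> U) m (F : 'I_m -> T) :
  map_tuple f [tuple F i | i < m] = [tuple f (F i) | i < m].
Proof. by apply: eq_from_tnth => i; rewrite tnth_map !tnth_mktuple. Qed.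

Section Restriction.
Variables (A : finType) (B : {set A}).

Lemma mem_restr_rel m (rho : {set m.-tuple A}) (t : m.-tuple (subT B)) :
  (t \in restr_rel B rho) = (map_tuple val t \in rho).
Proof. by rewrite inE. Qed.

Lemma restr_rel_gen_quasiorder m (rho : {set m.-tuple A}) :
  gen_quasiorder rho -> gen_quasiorder (restr_rel B rho).
Proof.
case=> refl dc; split=> [x | Mx rows cols].
  by rewrite mem_restr_rel map_mktuple; apply: refl.
rewrite mem_restr_rel map_mktuple.
apply: (dc (fun i j => val (Mx i j))) => [i | j].
  by have := rows i; rewrite mem_restr_rel map_mktuple.
by have := cols j; rewrite mem_restr_rel map_mktuple.
Qed.

Lemma restr_rel_preserves m (rho : {set m.-tuple A})
    (g : A -> A) (h : subT B -> subT B) :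
  (forall x, val (h x) = g (val x)) ->
  preserves g rho -> preserves h (restr_rel B rho).
Proof.
move=> hg pres t; rewrite !mem_restr_rel => t_rho.
have -> : map_tuple val (map_tuple h t) = map_tuple g (map_tuple val t).
  by apply: eq_from_tnth => i; rewrite !tnth_map hg.
exact: pres.
Qed.

Lemma gQuord_restr_rel (M : {set {ffun A -> A}}) m (rho : {set m.-tuple A}) :
  gQuord M rho -> gQuord (restr_maps B M) (restr_rel B rho).
Proof.
case=> gq pres; split; first exact: restr_rel_gen_quasiorder.
move=> h; rewrite inE => /existsP [g /andP [gM /forallP hg]].
by apply: (restr_rel_preserves (g := g)) => [x|]; [apply/eqP/hg | apply: pres].
Qed.

Definition restr_fun (g : A -> A) (gB : {in B, forall x, g x \in B}) :
    {ffun subT B -> subT B} :=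
  [ffun x => Sub (g (val x)) (gB _ (valP x))].

Lemma val_restr_fun g (gB : {in B, forall x, g x \in B}) x :
  val (restr_fun gB x) = g (val x).
Proof. by rewrite ffunE. Qed.

Lemma restr_fun_restr_maps (M : {set {ffun A -> A}}) (g : {ffun A -> A})
    (gB : {in B, forall x, g x \in B}) :
  g \in M -> restr_fun gB \in restr_maps B M.
Proof.
move=> gM; rewrite inE; apply/existsP; exists g.
by rewrite gM; apply/forallP => x; rewrite val_restr_fun.
Qed.

End Restriction.

Section Extension.
Variables (A : finType) (B : {set A}) (m : nat) (sigma : {set m.-tuple (subT B)}).

Definition extend_rel : {set m.-tuple A} :=
  [set map_tuple val s | s in sigma] :|: [set [tuple a | _ < m] | a : A].

Lemma extend_rel_val s : s \in sigma -> map_tuple val s \in extend_rel.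
Proof. by move=> s_sigma; rewrite inE imset_f. Qed.

Lemma extend_rel_reflexive : reflexive_rel extend_rel.
Proof. by move=> a; rewrite inE; apply/orP; right; apply: imset_f. Qed.

Lemma extend_rel_const t i :
  t \in extend_rel -> tnth t i \notin B -> forall j, tnth t j = tnth t i.
Proof.
case/setUP => /imsetP [] => [s _ -> | a _ -> _ j].
  by rewrite tnth_map (valP (tnth s i)).
by rewrite !tnth_mktuple.
Qed.

Lemma extend_rel_preserves g (gB : {in B, forall x, g x \in B}) :
  preserves (restr_fun gB) sigma -> preserves g extend_rel.
Proof.
move=> pres t /setUP [] /imsetP [] => [s s_sigma -> | a _ ->].
  have -> : map_tuple g (map_tuple val s) =
            map_tuple val (map_tuple (restr_fun gB) s).
    by apply: eq_from_tnth => i; rewrite !tnth_map val_restr_fun.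
  exact/extend_rel_val/pres.
by rewrite map_mktuple; apply: extend_rel_reflexive.
Qed.

Hypothesis B_neq0 : B != set0.

Lemma mem_extend_rel_val s :
  reflexive_rel sigma -> (map_tuple val s \in extend_rel) = (s \in sigma).
Proof.
move=> refl; apply/idP/idP; last exact: extend_rel_val.
have val_tuple_inj : injective (fun s : m.-tuple (subT B) => map_tuple val s).
  by move=> s1 s2 /(congr1 val) /(inj_map val_inj) /val_inj.
case/setUP => /imsetP [] => [s' s'_sigma /val_tuple_inj -> // | a _ E].
(* The default b0 is only relevant when m = 0: otherwise a is an entry of s. *)
have [b0 b0B] := set0Pn _ B_neq0.
have aB i : a = val (tnth s i).
  by have := congr1 (fun t => tnth t i) E; rewrite tnth_map tnth_mktuple.
suff -> : s = [tuple insubd (Sub b0 b0B) a | _ < m] by apply: refl.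
apply: eq_from_tnth => i; apply: val_inj.
by rewrite tnth_mktuple val_insubd (aB i) (valP (tnth s i)).
Qed.

Lemma restr_extend_rel : reflexive_rel sigma -> restr_rel B extend_rel = sigma.
Proof. by move=> refl; apply/setP => s; rewrite mem_restr_rel mem_extend_rel_val. Qed.

Lemma extend_rel_diag_closed :
  reflexive_rel sigma -> diag_closed sigma -> diag_closed extend_rel.
Proof.
move=> refl dc Mx rows cols.
have [inB | /forallPn [i0 /forallPn [j0 Mx_notin]]] :=
  boolP [forall i, forall j, Mx i j \in B].
  pose MxB i j : subT B := Sub (Mx i j) (forallP (forallP inB i) j).
  have := dc MxB; rewrite -(mem_extend_rel_val _ refl) map_mktuple; apply.
    by move=> i; rewrite -(mem_extend_rel_val _ refl) map_mktuple; apply: rows.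
  by move=> j; rewrite -(mem_extend_rel_val _ refl) map_mktuple; apply: cols.
have row_i0 j : Mx i0 j = Mx i0 j0.
  have := @extend_rel_const _ j0 (rows i0).
  by rewrite tnth_mktuple => /(_ Mx_notin j); rewrite tnth_mktuple.
have const i j : Mx i j = Mx i0 j0.
  have := @extend_rel_const _ i0 (cols j); rewrite tnth_mktuple row_i0.
  by move=> /(_ Mx_notin i); rewrite tnth_mktuple.
have -> : [tuple Mx i i | i < m] = [tuple Mx i0 j0 | _ < m].
  by apply: eq_from_tnth => i; rewrite !tnth_mktuple const.
exact: extend_rel_reflexive.
Qed.

Lemma gQuord_extend_rel (M : {set {ffun A -> A}}) :
  invariant_under B M -> gQuord (restr_maps B M) sigma -> gQuord M extend_rel.
Proof.
move=> inv [[refl dc] pres]; split; first split.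
- exact: extend_rel_reflexive.
- exact: extend_rel_diag_closed.
move=> g gM; apply: (extend_rel_preserves (gB := inv g gM)).
exact/pres/restr_fun_restr_maps.
Qed.

End Extension.

Theorem proposition4p8 (A : finType) (M : {set {ffun A -> A}}) (B : {set A}) :
  0 < #|A| ->
  B != set0 -> B \proper [set: A] ->
  invariant_under B M ->
  forall (m : nat) (sigma : {set m.-tuple (subT B)}),
    gQuord (restr_maps B M) sigma <->
    exists rho : {set m.-tuple A}, gQuord M rho /\ sigma = restr_rel B rho.
Proof.
move=> _ B_neq0 _ inv m sigma; split=> [gq | [rho [gq ->]]].
  exists (extend_rel sigma); split; first exact: gQuord_extend_rel.
  by case: gq => [[refl _] _]; rewrite restr_extend_rel.
exact: gQuord_restr_rel.
Qed.
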